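(* Let $m\ge 1$, let $S=\{1,\dots,m\}$, and let $\phi:S\times S\to\{+1,-1\}$ be any symmetric function. Then there exist an integer $n\le 2m$ and a map $\sigma:S\to\mathbb{Z}_2^n$, $i\mapsto\sigma_i$, such that for all $i,j\in S$, $$\phi(i,j)=(-1)^{\langle\sigma_i,\sigma_j\rangle_n},$$ where $\langle(i_1,\dots,i_n),(j_1,\dots,j_n)\rangle_n=i_1j_1+\dots+i_nj_n$ (computed mod $2$) is the standard `scalar product' on $\mathbb{Z}_2^n$.
   Context: The function $\phi$ is thought of as a sign rule $y^iy^j=\phi(i,j)y^jy^i$ for generators $y^1,\dots,y^m$ of an associative algebra; the theorem says every such sign rule is of $\mathbb{Z}_2^n$-commutative type for some $n\le 2m$. *)

From mathcomp Require Import all_boot all_order all_algebra.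
Set Implicit Arguments. Unset Strict Implicit. Unset Printing Implicit Defensive.
Import GRing.Theory.
Local Open Scope ring_scope.

Definition z2dot (n : nat) (u v : 'rV['F_2]_n) : 'F_2 :=
  \sum_(k < n) u 0 k * v 0 k.

Definition z2sign (a : 'F_2) : int := (-1) ^+ (nat_of_ord a).

From mathcomp Require Import all_boot all_order all_algebra.
Set Implicit Arguments.
Unset Strict Implicit.
Unset Printing Implicit Defensive.
Import GRing.Theory.
Local Open Scope ring_scope.

(* Encode phi as the symmetric F_2-matrix B with phi = (-1)^B; it then suffices
   to write B = S S^T with S having at most 2m columns, the rows of S being the
   sigma_i. Split off the first row and column, B = [[b, c^T], [c, B1]]: the
   two columns (1, c) and (d, 0) with d^2 = b - 1 produce the first row and
   column exactly and contribute c c^T to the lower block, so it remains to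
   factor the symmetric matrix B1 - c c^T, which has one row less. *)

Section GramFactorization.
Variable R : comPzRingType.
Hypothesis sqr_surj : forall x : R, exists y, y * y = x.

Lemma sym_mx_gram m (B : 'M[R]_m) : B^T = B ->
  exists n (S : 'M[R]_(m, n)), (n <= 2 * m)%N /\ S *m S^T = B.
Proof.
elim: m B => [|m IH] B symB.
  by exists 0%N, 0; split=> //; rewrite [LHS]flatmx0 [RHS]flatmx0.
have {symB} [b [c [B1 [defB symB1]]]] : exists b c (B1 : 'M_m),
    B = block_mx b c^T c B1 :> 'M_(1 + m) /\ B1^T = B1.
  exists (ulsubmx (B : 'M_(1 + m))), (dlsubmx (B : 'M_(1 + m))).
  exists (drsubmx (B : 'M_(1 + m))).
  by rewrite trmx_dlsub trmx_drsub symB submxK.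
have [|n [S1 [le_n_2m gramS1]]] := IH (B1 - c *m c^T).
  by rewrite linearB /= trmx_mul trmxK symB1.
have [d sqr_d] := sqr_surj (b 0 0 - 1).
pose S : 'M_(1 + m, 1 + 1 + n) := block_mx (row_mx 1 d%:M) 0 (row_mx c 0) S1.
suff gramS : S *m S^T = block_mx b c^T c B1.
  by exists _, S; rewrite defB gramS addnC mulnSr leq_add2r.
rewrite tr_block_mx !tr_row_mx mulmx_block !mul_row_col !trmx0 !mulmx0 !mul0mx.
rewrite !addr0 trmx1 !mulmx1 mul1mx gramS1 [c *m _ + _]addrC subrK.
by rewrite tr_scalar_mx -scalar_mxM sqr_d raddfB /= addrC subrK -mx11_scalar.
Qed.

End GramFactorization.

Lemma sqr_Fp2 (x : 'F_2) : exists y, y * y = x.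
Proof. by exists x; case: x => -[|[|n]] lt_x2; apply/val_inj. Qed.

Lemma z2dot_row m n (S : 'M['F_2]_(m, n)) i j :
  z2dot (row i S) (row j S) = (S *m S^T) i j.
Proof. by rewrite mxE; apply: eq_bigr => k _; rewrite !mxE. Qed.

Theorem theorem1 (m : nat) (hm : (1 <= m)%N) (phi : 'I_m -> 'I_m -> int)
  (hphi : forall i j, phi i j = 1 \/ phi i j = -1)
  (hsym : forall i j, phi i j = phi j i) :
  exists (n : nat) (sigma : 'I_m -> 'rV['F_2]_n),
    (n <= 2 * m)%N /\
    forall i j, phi i j = z2sign (z2dot (sigma i) (sigma j)).
Proof.
pose B : 'M['F_2]_m := \matrix_(i, j) (phi i j != 1)%:R.
have symB : B^T = B by apply/matrixP => i j; rewrite !mxE hsym.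
have [n [S [le_n_2m gramS]]] := sym_mx_gram sqr_Fp2 symB.
exists n, (fun i => row i S); split=> // i j.
by rewrite z2dot_row gramS mxE; case: (hphi i j) => ->.
Qed.
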